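(* Let $\mathcal A$ be a finite set, $\phi:F(\mathcal A)\to F(\mathcal A)$ a homomorphism, $\mathcal R\subset F(\mathcal A)$ finite, and let $G$ be the ascending HNN extension with finite presentation $\mathcal P=\langle t,\mathcal A:\mathcal R,\ t^{-1}at=\phi(a)\ \text{for all } a\in\mathcal A\rangle$. Then the subgroup $A$ of $G$ generated by $\mathcal A$ has presentation $$A=\Big\langle \mathcal A:\ N^\infty(\mathcal R,\phi)\equiv\bigcup_{i=0}^\infty\phi^{-i}\Big(N\big(\textstyle\bigcup_{j=0}^\infty\phi^j(\mathcal R)\big)\Big)\Big\rangle.$$ Furthermore: (1) $\phi^{-i}(N(\bigcup_{j\ge0}\phi^j(\mathcal R)))\subset\phi^{-(i+1)}(N(\bigcup_{j\ge0}\phi^j(\mathcal R)))$ for all $i\ge0$; (2) $\phi(N^\infty(\mathcal R,\phi))\subset N^\infty(\mathcal R,\phi)=\phi^{-1}(N^\infty(\mathcal R,\phi))$.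
   Context: $F(\mathcal A)$ is the free group on $\mathcal A$; for $S\subset F(\mathcal A)$, $N(S)$ denotes the normal closure of $S$ in $F(\mathcal A)$, and $\phi^{-i}$ denotes full preimage under $\phi^i$. *)

From HB Require Import structures.
From mathcomp Require Import all_boot.
Set Implicit Arguments. Unset Strict Implicit. Unset Printing Implicit Defensive.

Section FreeGroup.
Variable X : eqType.

(* a letter (x, false) stands for x, (x, true) for x^-1 *)
Definition letter := (X * bool)%type.
Definition linv (l : letter) : letter := (l.1, ~~ l.2).

Definition push (l : letter) (acc : seq letter) : seq letter :=
  match acc with
  | l' :: acc' => if l' == linv l then acc' else l :: acc
  | [::] => [:: l]
  end.
Definition reduce (w : seq letter) : seq letter := foldr push [::] w.

Fixpoint reducedb (s : seq letter) : bool :=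
  match s with
  | x :: ((y :: _) as t) => (y != linv x) && reducedb t
  | _ => true
  end.

Lemma reducedb_push l acc : reducedb acc -> reducedb (push l acc).
Proof.
case: acc => [|l' acc] //= H.
case: ifP => E; first by case: acc H => [|y t] //= /andP[].
by rewrite /= H E.
Qed.

Lemma reducedb_reduce w : reducedb (reduce w).
Proof. by elim: w => [|l w IH] //=; apply: reducedb_push. Qed.

Record fgroup := FG { fword : seq letter; fwordP : reducedb fword }.

HB.instance Definition _ := [isSub for fword].
HB.instance Definition _ := [Equality of fgroup by <:].

Definition fmk (w : seq letter) : fgroup := FG (reducedb_reduce w).
Definition fone : fgroup := @FG [::] isT.
Definition fmul (u v : fgroup) : fgroup := fmk (fword u ++ fword v).
Definition finv (u : fgroup) : fgroup := fmk (rev (map linv (fword u))).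
Definition fgen (x : X) : fgroup := fmk [:: (x, false)].

Inductive nclosure (S : fgroup -> Prop) : fgroup -> Prop :=
  | ncl_base s : S s -> nclosure S s
  | ncl_one : nclosure S fone
  | ncl_mul u v : nclosure S u -> nclosure S v -> nclosure S (fmul u v)
  | ncl_inv u : nclosure S u -> nclosure S (finv u)
  | ncl_conj u g : nclosure S u -> nclosure S (fmul (finv g) (fmul u g)).

End FreeGroup.

Arguments fone {X}.

Definition is_fhom (X Y : eqType) (f : fgroup X -> fgroup Y) : Prop :=
  forall u v, f (fmul u v) = fmul (f u) (f v).

Definition fext (X Y : eqType) (f : X -> fgroup Y) (u : fgroup X) : fgroup Y :=
  foldr (fun l acc => fmul (if l.2 then finv (f l.1) else f l.1) acc) fone (fword u).

(* F(A) -> F({t} + A), with t = None and a = Some a *)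
Definition fincl (A : eqType) : fgroup A -> fgroup (option A) :=
  fext (fun a => fgen (Some a)).

Definition NR (A : eqType) (R : seq (fgroup A)) (phi : fgroup A -> fgroup A)
  : fgroup A -> Prop :=
  nclosure (fun w => exists j r, r \in R /\ w = iter j phi r).

Definition Ninf (A : eqType) (R : seq (fgroup A)) (phi : fgroup A -> fgroup A)
  (w : fgroup A) : Prop :=
  exists i, NR R phi (iter i phi w).

Definition hnn_rel (A : eqType) (R : seq (fgroup A)) (phi : fgroup A -> fgroup A)
  (w : fgroup (option A)) : Prop :=
  (exists2 r, r \in R & w = fincl r) \/
  (exists a : A, w = fmul (finv (fgen None))
                      (fmul (fgen (Some a))
                         (fmul (fgen None) (finv (fincl (phi (fgen a))))))).

From Stdlib Require Import ZArith Lia FunctionalExtensionality.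
From mathcomp Require Import all_boot.
Set Implicit Arguments. Unset Strict Implicit. Unset Printing Implicit Defensive.

(* In G, conjugation by t acts on the image of F(A) as phi, so w dies in G as
   soon as some phi^i w lies in the normal closure of the phi-orbit of R:
   this gives N(N^oo) <= ker. Conversely, send u in F(t, A) to an A-word
   [descend u M] representing t^-M u t^(M - tdeg u), where tdeg u is the
   exponent sum of t in u. This is multiplicative up to a shift of M by tdeg,
   sends every relator into N^oo once M is large, and sends w in F(A) to
   phi^M w. So if w dies in G then phi^M w lies in N^oo, hence so does w, as
   N^oo = phi^-1(N^oo). Properties (1) and (2) hold because phi maps
   N(U_j phi^j R) into itself. *)

Section FreeGroupLaws.
Variable X : eqType.
Implicit Types (s acc : seq (letter X)) (l : letter X) (u v w : fgroup X).

Lemma linvK : involutive (@linv X).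
Proof. by case=> x []. Qed.

Lemma reducedb_behead l s : reducedb (l :: s) -> reducedb s.
Proof. by case: s => // y t /andP[]. Qed.

Lemma reduce_id s : reducedb s -> reduce s = s.
Proof.
elim: s => [|l s IHs] //= red_ls.
rewrite IHs ?(reducedb_behead red_ls) //.
by case: s red_ls {IHs} => [|y t] //= /andP[/negbTE->].
Qed.

Lemma push_linvK l acc : reducedb acc -> push l (push (linv l) acc) = acc.
Proof.
case: acc => [|y acc] /=; first by rewrite eqxx.
rewrite linvK; case: eqP => [->|_] red_acc; last by rewrite /= eqxx.
by case: acc red_acc => [|z acc] //= /andP[/negbTE->].
Qed.

Lemma foldr_reduce (T : Type) (F : letter X -> T -> T) (x0 : T) :
  (forall l x, F l (F (linv l) x) = x) ->
  forall s, foldr F x0 (reduce s) = foldr F x0 s.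
Proof.
move=> FK; elim=> [|l s IHs] //=; rewrite -IHs.
by case: (reduce s) => [|y r] //=; case: eqP => [->|_].
Qed.

(* [pushs s acc] is the reduced form of [s ++ acc], for [acc] reduced. *)
Definition pushs s acc := foldr (@push X) acc s.

Lemma reduceE s : reduce s = pushs s [::].
Proof. by []. Qed.

Lemma reducedb_pushs s acc : reducedb acc -> reducedb (pushs s acc).
Proof. by move=> red_acc; elim: s => //= l s; apply: reducedb_push. Qed.

Lemma pushs_cat s r acc : pushs (s ++ r) acc = pushs s (pushs r acc).
Proof. exact: foldr_cat. Qed.

Lemma reduce_cat s r : reduce (s ++ r) = pushs s (reduce r).
Proof. exact: foldr_cat. Qed.

Lemma pushs_reduce s acc : reducedb acc -> pushs (reduce s) acc = pushs s acc.
Proof.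
move=> red_acc; elim: s => [|l s /= <-] //.
case: (reduce s) => [|y r] //=; case: eqP => [->|_] //=.
by rewrite push_linvK // reducedb_pushs.
Qed.

Lemma pushs_linvK s acc : reducedb acc ->
  pushs (rev (map (@linv X) s)) (pushs s acc) = acc.
Proof.
elim: s acc => [|l s IHs] acc red_acc //=.
rewrite rev_cons -cats1 pushs_cat /= -{2}(linvK l) push_linvK ?IHs //.
exact: reducedb_pushs.
Qed.

Lemma pushs_linvKV s acc : reducedb acc ->
  pushs s (pushs (rev (map (@linv X) s)) acc) = acc.
Proof.
move=> red_acc; have := pushs_linvK (rev (map (@linv X) s)) red_acc.
by rewrite map_rev revK (mapK linvK).
Qed.

Lemma fmulA u v w : fmul u (fmul v w) = fmul (fmul u v) w.
Proof.
apply: val_inj => /=.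
rewrite [in RHS]reduce_cat pushs_reduce ?reducedb_reduce // -pushs_cat.
by rewrite reduce_cat reduce_id ?reducedb_reduce // -reduce_cat catA.
Qed.

Lemma fmul1g u : fmul fone u = u.
Proof. by apply: val_inj; rewrite /= reduce_id // fwordP. Qed.

Lemma fmulg1 u : fmul u fone = u.
Proof. by apply: val_inj; rewrite /= cats0 reduce_id // fwordP. Qed.

Lemma fmulVg u : fmul (finv u) u = fone.
Proof.
apply: val_inj => /=; rewrite reduce_cat pushs_reduce ?reducedb_reduce //.
by rewrite reduceE pushs_linvK.
Qed.

Lemma fmulgV u : fmul u (finv u) = fone.
Proof.
apply: val_inj => /=; rewrite reduce_cat reduce_id ?reducedb_reduce //.
exact: pushs_linvKV.
Qed.

Lemma fmulKg u v : fmul (finv u) (fmul u v) = v.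
Proof. by rewrite fmulA fmulVg fmul1g. Qed.

Lemma fmulVKg u v : fmul u (fmul (finv u) v) = v.
Proof. by rewrite fmulA fmulgV fmul1g. Qed.

Lemma fmulgK u v : fmul (fmul u v) (finv v) = u.
Proof. by rewrite -fmulA fmulgV fmulg1. Qed.

Lemma fmulgVK u v : fmul (fmul u (finv v)) v = u.
Proof. by rewrite -fmulA fmulVg fmulg1. Qed.

Lemma fmul1_eq u v : fmul u v = fone -> u = finv v.
Proof. by move=> uv1; rewrite -(fmulgK u v) uv1 fmul1g. Qed.

Lemma finvK : involutive (@finv X).
Proof. by move=> u; symmetry; apply: fmul1_eq; apply: fmulgV. Qed.

Lemma finv1 : finv (@fone X) = fone.
Proof. by symmetry; apply: fmul1_eq; rewrite fmul1g. Qed.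

Lemma finvM u v : finv (fmul u v) = fmul (finv v) (finv u).
Proof. by symmetry; apply: fmul1_eq; rewrite -fmulA fmulKg fmulVg. Qed.

Definition fconj u g := fmul (finv g) (fmul u g).

Lemma fconjMg u v g : fconj (fmul u v) g = fmul (fconj u g) (fconj v g).
Proof. by rewrite /fconj !fmulA fmulgK. Qed.

Lemma fconjVg u g : fconj (finv u) g = finv (fconj u g).
Proof. by rewrite /fconj !finvM finvK fmulA. Qed.

Definition letter_val (Y : eqType) (g : X -> fgroup Y) l : fgroup Y :=
  if l.2 then finv (g l.1) else g l.1.

Lemma fgroup_ind (P : fgroup X -> Prop) :
  P fone -> (forall l u, P u -> P (fmul (letter_val (@fgen X) l) u)) ->
  forall u, P u.
Proof.
move=> P1 PM [s red_s]; elim: s red_s => [|l s IHs] red_s.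
  by have -> : FG red_s = fone by apply: val_inj.
have -> : FG red_s = fmul (letter_val (@fgen X) l) (FG (reducedb_behead red_s)).
  by apply: val_inj; case: l red_s => x [] red_s;
    rewrite /= -{1}(reduce_id red_s).
exact/PM/IHs.
Qed.

End FreeGroupLaws.

Section Homomorphisms.
Variables X Y : eqType.

Lemma fhom1 (f : fgroup X -> fgroup Y) : is_fhom f -> f fone = fone.
Proof. by move=> fM; rewrite -(fmulKg (f fone) (f fone)) -fM fmul1g fmulVg. Qed.

Lemma fhomV (f : fgroup X -> fgroup Y) : is_fhom f ->
  forall u, f (finv u) = finv (f u).
Proof. by move=> fM u; apply: fmul1_eq; rewrite -fM fmulVg fhom1. Qed.

Lemma fext_hom (g : X -> fgroup Y) : is_fhom (fext g).
Proof.
have fext_foldr s y : foldr (fun l => fmul (letter_val g l)) y s =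
                      fmul (foldr (fun l => fmul (letter_val g l)) fone s) y.
  by elim: s => [|l s IHs] /=; rewrite ?fmul1g // IHs fmulA.
move=> u v; rewrite /fext [fword (fmul u v)]/= foldr_reduce.
  by rewrite foldr_cat fext_foldr.
by case=> x [] y; [apply: fmulKg | apply: fmulVKg].
Qed.

Lemma fext_letter (g : X -> fgroup Y) l :
  fext g (letter_val (@fgen X) l) = letter_val g l.
Proof. by case: l => x [] /=; rewrite /fext /= fmulg1. Qed.

Lemma nclosure_hom (f : fgroup X -> fgroup Y) (S : fgroup X -> Prop)
    (S' : fgroup Y -> Prop) : is_fhom f ->
  (forall s, S s -> nclosure S' (f s)) ->
  forall u, nclosure S u -> nclosure S' (f u).
Proof.
move=> fM fS u; elim=> {u} [s /fS //|||u _ Nu|u g _ Nu].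
- by rewrite fhom1 //; apply: ncl_one.
- by move=> u v _ Nu _ Nv; rewrite fM; apply: ncl_mul.
- by rewrite fhomV //; apply: ncl_inv.
- by rewrite !fM fhomV //; apply: ncl_conj.
Qed.

End Homomorphisms.

Lemma iter_fhom (X : eqType) (phi : fgroup X -> fgroup X) :
  is_fhom phi -> forall i, is_fhom (iter i phi).
Proof. by move=> phiM; elim=> [|i IHi] u v //=; rewrite IHi phiM. Qed.

Lemma fincl_hom {A : eqType} : is_fhom (@fincl A).
Proof. exact: fext_hom. Qed.

Lemma fincl_gen (A : eqType) (a : A) : fincl (fgen a) = fgen (Some a).
Proof. by rewrite /fincl /fext /= fmulg1. Qed.

Section NormalClosure.
Variables (X : eqType) (S : fgroup X -> Prop).
Local Notation N := (nclosure S).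

Definition ncl_eqv (x y : fgroup X) := N (fmul x (finv y)).

Lemma ncl_eqvP x y : ncl_eqv x y -> N x <-> N y.
Proof.
move=> xy; split=> Nx.
  have -> : y = fmul (finv (fmul x (finv y))) x by rewrite finvM finvK fmulgVK.
  exact/ncl_mul/Nx/ncl_inv.
by rewrite -(fmulgVK x y); apply: ncl_mul.
Qed.

Lemma ncl_eqv_sym x y : ncl_eqv x y -> ncl_eqv y x.
Proof. by move/ncl_inv; rewrite /ncl_eqv finvM finvK. Qed.

Lemma ncl_eqv_mul x x' y y' :
  ncl_eqv x x' -> ncl_eqv y y' -> ncl_eqv (fmul x y) (fmul x' y').
Proof.
move=> xx' yy'; rewrite /ncl_eqv.
have -> : fmul (fmul x y) (finv (fmul x' y')) =
    fmul (fconj (fmul y (finv y')) (finv x)) (fmul x (finv x')).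
  by rewrite /fconj finvK finvM !fmulA fmulgVK.
by apply: ncl_mul => //; apply: ncl_conj.
Qed.

Lemma ncl_eqv_inv x x' : ncl_eqv x x' -> ncl_eqv (finv x) (finv x').
Proof.
move=> xx'; rewrite /ncl_eqv finvK -[x' in fmul _ x'](fmulgVK x' x).
exact/ncl_conj/ncl_eqv_sym.
Qed.

Lemma nclosure_conj x g : N (fconj x g) <-> N x.
Proof.
split=> [Nxg|]; last exact: ncl_conj.
move/(ncl_conj (finv g)): Nxg.
by rewrite /fconj finvK !fmulA fmulgV fmul1g fmulgK.
Qed.

End NormalClosure.

Section LimitRelators.
Variables (A : eqType) (phi : fgroup A -> fgroup A) (R : seq (fgroup A)).
Hypothesis phi_hom : is_fhom phi.

Lemma NR_phi w : NR R phi w -> NR R phi (phi w).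
Proof.
apply: nclosure_hom => // s [j [r [Rr ->]]].
by apply: ncl_base; exists j.+1, r.
Qed.

Lemma NR_iter i w : NR R phi w -> NR R phi (iter i phi w).
Proof. by elim: i => [|i IHi] //= /IHi /NR_phi. Qed.

Lemma Ninf_phi w : Ninf R phi w <-> Ninf R phi (phi w).
Proof.
split=> [[i Nw]|[i Nw]]; last by exists i.+1; rewrite iterSr.
by exists i; rewrite -iterSr /=; apply: NR_phi.
Qed.

Lemma Ninf_iter i w : Ninf R phi (iter i phi w) -> Ninf R phi w.
Proof. by elim: i w => [|i IHi] w //= Nw; apply/IHi/Ninf_phi. Qed.

Lemma Ninf_one : Ninf R phi fone.
Proof. by exists 0; apply: ncl_one. Qed.

Lemma Ninf_mul u v : Ninf R phi u -> Ninf R phi v -> Ninf R phi (fmul u v).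
Proof.
move=> [i Nu] [j Nv]; exists (j + i); rewrite iter_fhom //.
by apply: ncl_mul; [rewrite iterD | rewrite addnC iterD]; apply: NR_iter.
Qed.

Lemma Ninf_inv u : Ninf R phi u -> Ninf R phi (finv u).
Proof.
move=> [i Nu]; exists i.
by rewrite (fhomV (iter_fhom phi_hom i)); apply: ncl_inv.
Qed.

Lemma Ninf_conj u g : Ninf R phi u -> Ninf R phi (fconj u g).
Proof.
move=> [i Nu]; exists i.
by rewrite /fconj !iter_fhom // (fhomV (iter_fhom phi_hom i)); apply: ncl_conj.
Qed.

End LimitRelators.

Section AscendingHNN.
Variables (A : eqType) (phi : fgroup A -> fgroup A) (R : seq (fgroup A)).
Hypothesis phi_hom : is_fhom phi.

Local Notation T := (option A).
Local Notation N := (nclosure (hnn_rel R phi)).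
Local Notation t := (fgen (@None A)).

Lemma fincl_phi x : ncl_eqv (hnn_rel R phi) (fincl (phi x)) (fconj (fincl x) t).
Proof.
elim/fgroup_ind: x => [|[a b] u IHu].
  rewrite (fhom1 phi_hom) (fhom1 fincl_hom) /fconj fmul1g fmulVg /ncl_eqv finv1.
  by rewrite fmul1g; apply: ncl_one.
rewrite phi_hom !fincl_hom fconjMg; apply: ncl_eqv_mul => //.
have gen_a : ncl_eqv (hnn_rel R phi) (fincl (phi (fgen a)))
                     (fconj (fincl (fgen a)) t).
  apply/ncl_eqv_sym/ncl_base; right; exists a.
  by rewrite fincl_gen /fconj !fmulA.
case: b => //; rewrite /letter_val /= (fhomV phi_hom) !(fhomV fincl_hom).
by rewrite fconjVg; apply: ncl_eqv_inv.
Qed.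

Lemma N_fincl_iter i x : N (fincl (iter i phi x)) <-> N (fincl x).
Proof.
elim: i => [|i IHi] //=.
by rewrite (ncl_eqvP (fincl_phi _)) nclosure_conj.
Qed.

Lemma Ninf_ker_hnn w : nclosure (Ninf R phi) w -> N (fincl w).
Proof.
apply: nclosure_hom; first exact: fincl_hom.
move=> s [i]; rewrite -(N_fincl_iter i).
apply: nclosure_hom; first exact: fincl_hom.
move=> _ [j [r [Rr ->]]]; apply/N_fincl_iter/ncl_base; left; by exists r.
Qed.


Definition tdeg_letter (l : letter T) : Z :=
  match l with (None, false) => 1 | (None, true) => -1 | _ => 0 end%Z.

Definition tdeg (u : fgroup T) : Z :=
  foldr (fun l => Z.add (tdeg_letter l)) 0%Z (fword u).

(* [descend u M] is an A-word representing t^-M u t^(M - tdeg u) in G.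
   [Z.to_nat] truncates negative levels to 0; only large M matter. *)
Definition descend_letter (l : letter T) (M : Z) : fgroup A :=
  if l is (Some a, b)
  then letter_val (fun a => iter (Z.to_nat M) phi (fgen a)) (a, b)
  else fone.

Definition descend_step (l : letter T) (F : Z -> fgroup A) (M : Z) : fgroup A :=
  fmul (descend_letter l M) (F (M - tdeg_letter l)%Z).

Definition descend (u : fgroup T) : Z -> fgroup A :=
  foldr descend_step (fun=> fone) (fword u).

Lemma descend_stepK l F : descend_step l (descend_step (linv l) F) = F.
Proof.
apply: functional_extensionality => M; rewrite /descend_step.
case: l => [[a|] []] /=; rewrite ?Z.sub_0_r ?fmulKg ?fmulVKg ?fmul1g //.
all: by congr F; lia.
Qed.

Lemma tdeg1 : tdeg fone = 0%Z.
Proof. by []. Qed.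

Lemma tdeg_mul u v : tdeg (fmul u v) = (tdeg u + tdeg v)%Z.
Proof.
have tdeg_letterK l z : (tdeg_letter l + (tdeg_letter (linv l) + z) = z)%Z.
  by case: l => [[a|] []]; cbv [tdeg_letter linv fst snd negb]; lia.
rewrite /tdeg [fword (fmul u v)]/= (foldr_reduce _ tdeg_letterK) foldr_cat.
by elim: (fword u) => [|l s IHs] //=; rewrite IHs; lia.
Qed.

Lemma descend_mul u v M :
  descend (fmul u v) M = fmul (descend u M) (descend v (M - tdeg u)%Z).
Proof.
rewrite /descend /tdeg [fword (fmul u v)]/= (foldr_reduce _ descend_stepK).
rewrite foldr_cat.
elim: (fword u) M => [|l s IHs] M /=; first by rewrite fmul1g Z.sub_0_r.
by rewrite /descend_step IHs fmulA; do 2 f_equal; lia.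
Qed.

Lemma tdeg_inv u : tdeg (finv u) = (- tdeg u)%Z.
Proof. by have := tdeg_mul u (finv u); rewrite fmulgV tdeg1; lia. Qed.

Lemma descend_inv u M : descend (finv u) M = finv (descend u (M + tdeg u)%Z).
Proof.
apply: fmul1_eq.
have -> : (M + tdeg u = M - tdeg (finv u))%Z by rewrite tdeg_inv; lia.
by rewrite -descend_mul fmulVg.
Qed.

Lemma descend_t M : descend t M = fone.
Proof. by rewrite /descend /= /descend_step /= fmul1g. Qed.

Lemma tdeg_gen a : tdeg (fgen (Some a)) = 0%Z.
Proof. by []. Qed.

Lemma descend_gen a M :
  descend (fgen (Some a)) M = iter (Z.to_nat M) phi (fgen a).
Proof. by rewrite /descend /= /descend_step /= fmulg1. Qed.

Lemma tdeg_fincl w : tdeg (fincl w) = 0%Z.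
Proof.
elim/fgroup_ind: w => [|[a b] u IHu]; first by rewrite (fhom1 (@fincl_hom A)).
by rewrite fincl_hom tdeg_mul IHu; case: b.
Qed.

Lemma descend_fincl w M : descend (fincl w) M = iter (Z.to_nat M) phi w.
Proof.
elim/fgroup_ind: w => [|[a b] u IHu].
  by rewrite (fhom1 (@fincl_hom A)) (fhom1 (iter_fhom phi_hom _)).
rewrite fincl_hom descend_mul tdeg_fincl Z.sub_0_r IHu (iter_fhom phi_hom).
congr fmul; rewrite /fincl fext_letter; case: b => /=; last exact: descend_gen.
rewrite descend_inv tdeg_gen Z.add_0_r descend_gen.
by rewrite (fhomV (iter_fhom phi_hom _)).
Qed.

Definition eventually_Ninf (u : fgroup T) : Prop :=
  tdeg u = 0%Z /\ exists M0, forall M, (M0 <= M)%Z -> Ninf R phi (descend u M).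

Lemma eventually_Ninf_rel u : hnn_rel R phi u -> eventually_Ninf u.
Proof.
case=> [[r Rr ->]|[a ->]].
  split; first exact: tdeg_fincl.
  exists 0%Z => M _; rewrite descend_fincl; exists 0.
  by apply: ncl_base; exists (Z.to_nat M), r.
split; first by rewrite !tdeg_mul !tdeg_inv tdeg_fincl.
exists 0%Z => M M_ge0.
rewrite !descend_mul !descend_inv !tdeg_inv !descend_t finv1 !fmul1g tdeg_fincl.
rewrite descend_fincl descend_gen /=.
(* t^-1 lifts the level by one, so a contributes phi^(M+1) a = phi^M (phi a) *)
have -> : Z.to_nat (M - -1) = (Z.to_nat M).+1.
  by rewrite -Z2Nat.inj_succ; [congr Z.to_nat|]; lia.
have -> : (M - -1 - 0 - 1 + 0 = M)%Z by lia.
by rewrite iterSr fmulgV; apply: Ninf_one.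
Qed.

Lemma eventually_Ninf_one : eventually_Ninf fone.
Proof. by split=> //; exists 0%Z => M _; apply: Ninf_one. Qed.

Lemma eventually_Ninf_mul u v :
  eventually_Ninf u -> eventually_Ninf v -> eventually_Ninf (fmul u v).
Proof.
move=> [tdeg_u [Mu Nu]] [tdeg_v [Mv Nv]].
split; first by rewrite tdeg_mul tdeg_u tdeg_v.
exists (Z.max Mu Mv) => M M_ge; rewrite descend_mul tdeg_u Z.sub_0_r.
by apply: (Ninf_mul phi_hom); [apply: Nu | apply: Nv]; lia.
Qed.

Lemma eventually_Ninf_inv u : eventually_Ninf u -> eventually_Ninf (finv u).
Proof.
move=> [tdeg_u [Mu Nu]]; split; first by rewrite tdeg_inv tdeg_u.
exists Mu => M M_ge; rewrite descend_inv tdeg_u Z.add_0_r.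
exact/(Ninf_inv phi_hom)/Nu.
Qed.

Lemma eventually_Ninf_conj u g :
  eventually_Ninf u -> eventually_Ninf (fconj u g).
Proof.
move=> [tdeg_u [Mu Nu]].
split; first by rewrite !tdeg_mul tdeg_inv tdeg_u; lia.
exists (Mu - tdeg g)%Z => M M_ge.
rewrite /fconj !descend_mul descend_inv tdeg_inv tdeg_u.
have -> : (M - - tdeg g - 0 = M + tdeg g)%Z by lia.
have -> : (M - - tdeg g = M + tdeg g)%Z by lia.
by apply: (Ninf_conj phi_hom); apply: Nu; lia.
Qed.

Lemma nclosure_eventually_Ninf u : N u -> eventually_Ninf u.
Proof.
elim=> {u} [u /eventually_Ninf_rel //|||u _ /eventually_Ninf_inv //|u g _].
- exact: eventually_Ninf_one.
- by move=> u v _ Nu _ Nv; apply: eventually_Ninf_mul.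
- exact: eventually_Ninf_conj.
Qed.

Lemma ker_hnn_Ninf w : N (fincl w) -> Ninf R phi w.
Proof.
case/nclosure_eventually_Ninf=> _ [M0 NM].
apply: (@Ninf_iter _ _ _ phi_hom (Z.to_nat (Z.max M0 0))).
by rewrite -descend_fincl; apply: NM; lia.
Qed.

End AscendingHNN.

Theorem theorem4p4 (A : finType) (phi : fgroup A -> fgroup A)
  (phi_hom : is_fhom phi) (R : seq (fgroup A)) :
  (* the kernel of F(A) -> G, i.e. of F(A) -> A, is N(N^oo(R,phi)):
     A = < A : N^oo(R,phi) > *)
  (forall w : fgroup A,
     nclosure (hnn_rel R phi) (fincl w) <-> nclosure (Ninf R phi) w) /\
  (* (1) *)
  (forall (i : nat) (w : fgroup A),
     NR R phi (iter i phi w) -> NR R phi (iter i.+1 phi w)) /\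
  (* (2) *)
  (forall w : fgroup A, Ninf R phi w -> Ninf R phi (phi w)) /\
  (forall w : fgroup A, Ninf R phi w <-> Ninf R phi (phi w)).
Proof.
split.
  move=> w; split; last exact: Ninf_ker_hnn.
  by move/(ker_hnn_Ninf phi_hom); apply: ncl_base.
split; first by move=> i w; apply: NR_phi.
by split=> w; [case: (Ninf_phi R phi_hom w) | apply: Ninf_phi].
Qed.
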